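(* Let $D$ be a pv-monoid (idempotent, with symmetric valuation function), $P$ a nonempty finite set of ports, and $\zeta,\zeta_1,\zeta_2,\zeta_3\in PCL(D,P)$. Then: (i) $\zeta\uplus 0\equiv 0\equiv 0\uplus\zeta$. (ii) If $\otimes$ is commutative, then $\zeta_1\uplus\zeta_2\equiv\zeta_2\uplus\zeta_1$. (iii) If $D$ is associative and $\oplus$-distributive, then $(\zeta_1\uplus\zeta_2)\uplus\zeta_3\equiv\zeta_1\uplus(\zeta_2\uplus\zeta_3)$. (iv) If $D$ is left-$\oplus$-distributive, then $\zeta\otimes(\zeta_1\oplus\zeta_2)\equiv(\zeta\otimes\zeta_1)\oplus(\zeta\otimes\zeta_2)$. (v) If $D$ is right-$\oplus$-distributive, then $(\zeta_1\oplus\zeta_2)\otimes\zeta\equiv(\zeta_1\otimes\zeta)\oplus(\zeta_2\otimes\zeta)$.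
   Context: A valuation monoid $(D,\oplus,\mathrm{val},0)$ consists of a commutative monoid $(D,\oplus,0)$ and a map $\mathrm{val}:D^+\to D$ ($D^+$ = nonempty finite sequences over $D$) with $\mathrm{val}(d)=d$ and $\mathrm{val}(d_1,\dots,d_n)=0$ whenever some $d_i=0$. A pv-monoid $(D,\oplus,\mathrm{val},\otimes,0,1)$ is a valuation monoid with a binary operation $\otimes$ and an element $1$ such that $\mathrm{val}(1,\dots,1)=1$ for any $n\ge1$ arguments, $0\otimes d=d\otimes0=0$, $1\otimes d=d\otimes1=d$. Standing assumption: $D$ is idempotent ($d\oplus d=d$) and $\mathrm{val}$ is symmetric. $D$ is left-$\oplus$-distributive if $d\otimes(d_1\oplus d_2)=(d\otimes d_1)\oplus(d\otimes d_2)$, right-$\oplus$-distributive if $(d_1\oplus d_2)\otimes d=(d_1\otimes d)\oplus(d_2\otimes d)$, $\oplus$-distributive if both; associative if $\otimes$ is associative. $I(P)$ is the set of nonempty subsets of $P$, $C(P)$ the set of nonempty subsets of $I(P)$. PIL formulas: $\phi::=true\mid p\mid\overline{\phi}\mid\phi\vee\phi$ ($p\in P$), $\alpha\models_i p$ iff $p\in\alpha$, other connectives as usual. PCL formulas: $f::=true\mid\phi\mid\neg f\mid f\sqcup f\mid f+f$; $\gamma\models\phi$ iff every $\alpha\in\gamma$ satisfies $\phi$; $\neg,\sqcup$ are complement and union; $\gamma\models f_1+f_2$ iff $\gamma=\gamma_1\cup\gamma_2$ with $\gamma_1,\gamma_2\in C(P)$, $\gamma_1\models f_1,\gamma_2\models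 f_2$. w$_{\text{pvm}}$PCL formulas ($PCL(D,P)$): $\zeta::=d\mid f\mid\zeta\oplus\zeta\mid\zeta\otimes\zeta\mid\zeta\uplus\zeta\mid *\zeta$; semantics $\|\zeta\|:C(P)\to D$: $\|d\|(\gamma)=d$; $\|f\|(\gamma)\in\{0,1\}$ is $1$ iff $\gamma\models f$; $\oplus,\otimes$ pointwise; $\|\zeta_1\uplus\zeta_2\|(\gamma)=\bigoplus(\|\zeta_1\|(\gamma_1)\otimes\|\zeta_2\|(\gamma_2))$ over disjoint $\gamma_1,\gamma_2\in C(P)$ with union $\gamma$; $\|*\zeta\|(\gamma)=\bigoplus_{n>0}\bigoplus\mathrm{val}(\|\zeta\|(\gamma_1),\dots,\|\zeta\|(\gamma_n))$ over pairwise disjoint $\gamma_1,\dots,\gamma_n\in C(P)$ with union $\gamma$. $\zeta\equiv\zeta'$ iff $\|\zeta\|=\|\zeta'\|$. An empty $\oplus$-sum is $0$. *)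

From Stdlib Require Import Permutation.
From mathcomp Require Import all_boot.
Set Implicit Arguments. Unset Strict Implicit. Unset Printing Implicit Defensive.

(* val : D^+ -> D is encoded as a function of the head and the tail of a
   nonempty sequence: (d_1,...,d_n) is represented by (d_1, [:: d_2; ..; d_n]). *)
Record pvMonoid := PvMonoid {
  pv_car :> Type;
  pv_add : pv_car -> pv_car -> pv_car;
  pv_zero : pv_car;
  pv_val : pv_car -> seq pv_car -> pv_car;
  pv_mul : pv_car -> pv_car -> pv_car;
  pv_one : pv_car;
  pv_addA : forall a b c, pv_add a (pv_add b c) = pv_add (pv_add a b) c;
  pv_addC : forall a b, pv_add a b = pv_add b a;
  pv_add0 : forall a, pv_add pv_zero a = a;
  pv_val1 : forall d, pv_val d [::] = d;
  pv_val0h : forall ds, pv_val pv_zero ds = pv_zero;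
  pv_val0t : forall d ds1 ds2, pv_val d (ds1 ++ pv_zero :: ds2) = pv_zero;
  pv_val_one : forall n, pv_val pv_one (nseq n pv_one) = pv_one;
  pv_mul0l : forall d, pv_mul pv_zero d = pv_zero;
  pv_mul0r : forall d, pv_mul d pv_zero = pv_zero;
  pv_mul1l : forall d, pv_mul pv_one d = d;
  pv_mul1r : forall d, pv_mul d pv_one = d;
  pv_idem : forall d, pv_add d d = d;
  pv_val_sym : forall d ds e es,
    Permutation (d :: ds) (e :: es) -> pv_val d ds = pv_val e es
}.

Arguments pv_add {_}. Arguments pv_zero {_}. Arguments pv_val {_}.
Arguments pv_mul {_}. Arguments pv_one {_}.

Definition mul_commutative (D : pvMonoid) := forall a b : D, pv_mul a b = pv_mul b a.
Definition mul_associative (D : pvMonoid) :=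
  forall a b c : D, pv_mul a (pv_mul b c) = pv_mul (pv_mul a b) c.
Definition left_add_distributive (D : pvMonoid) :=
  forall d d1 d2 : D, pv_mul d (pv_add d1 d2) = pv_add (pv_mul d d1) (pv_mul d d2).
Definition right_add_distributive (D : pvMonoid) :=
  forall d d1 d2 : D, pv_mul (pv_add d1 d2) d = pv_add (pv_mul d1 d) (pv_mul d2 d).
Definition add_distributive (D : pvMonoid) :=
  left_add_distributive D /\ right_add_distributive D.

Section Logic.
Variable P : finType.

Definition isI (a : {set P}) : bool := a != set0.
Definition isC (g : {set {set P}}) : bool := (g != set0) && [forall a in g, isI a].

Inductive pil : Type :=
| PIL_true : pil
| PIL_port : P -> pil
| PIL_neg : pil -> pil
| PIL_or : pil -> pil -> pil.

Fixpoint pil_sat (a : {set P}) (phi : pil) : bool :=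
  match phi with
  | PIL_true => true
  | PIL_port p => p \in a
  | PIL_neg phi' => ~~ pil_sat a phi'
  | PIL_or phi1 phi2 => pil_sat a phi1 || pil_sat a phi2
  end.

Inductive pcl : Type :=
| PCL_true : pcl
| PCL_pil : pil -> pcl
| PCL_neg : pcl -> pcl
| PCL_union : pcl -> pcl -> pcl
| PCL_plus : pcl -> pcl -> pcl.

(* meaningful for g with isC g *)
Fixpoint pcl_sat (g : {set {set P}}) (f : pcl) : bool :=
  match f with
  | PCL_true => true
  | PCL_pil phi => [forall a in g, pil_sat a phi]
  | PCL_neg f' => ~~ pcl_sat g f'
  | PCL_union f1 f2 => pcl_sat g f1 || pcl_sat g f2
  | PCL_plus f1 f2 =>
      [exists g1 : {set {set P}}, exists g2 : {set {set P}},
         [&& isC g1, isC g2, g == g1 :|: g2, pcl_sat g1 f1 & pcl_sat g2 f2]]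
  end.

Variable D : pvMonoid.

Inductive wpcl : Type :=
| W_const : D -> wpcl
| W_pcl : pcl -> wpcl
| W_add : wpcl -> wpcl -> wpcl
| W_mul : wpcl -> wpcl -> wpcl
| W_uplus : wpcl -> wpcl -> wpcl
| W_star : wpcl -> wpcl.

Definition star_decomp n (g : {set {set P}}) (t : n.-tuple {set {set P}}) : bool :=
  [&& [forall i : 'I_n, isC (tnth t i)],
      [forall i : 'I_n, forall j : 'I_n, (i != j) ==> [disjoint tnth t i & tnth t j]]
    & (\bigcup_(i < n) tnth t i) == g].

(* The sum over n > 0 is restricted to 0 < n <= #|g|: for n > #|g| there is no
   decomposition of g into n pairwise disjoint nonempty parts, so those terms
   are empty sums (= 0). *)
Fixpoint wsem (z : wpcl) (g : {set {set P}}) : D :=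
  match z with
  | W_const d => d
  | W_pcl f => if pcl_sat g f then pv_one else pv_zero
  | W_add z1 z2 => pv_add (wsem z1 g) (wsem z2 g)
  | W_mul z1 z2 => pv_mul (wsem z1 g) (wsem z2 g)
  | W_uplus z1 z2 =>
      \big[pv_add/pv_zero]_(p : {set {set P}} * {set {set P}} |
          [&& isC p.1, isC p.2, [disjoint p.1 & p.2] & p.1 :|: p.2 == g])
        pv_mul (wsem z1 p.1) (wsem z2 p.2)
  | W_star z1 =>
      \big[pv_add/pv_zero]_(n < #|g|)
        \big[pv_add/pv_zero]_(t : (n.+1).-tuple {set {set P}} | star_decomp g t)
          pv_val (wsem z1 (thead t)) (map (wsem z1) (behead t))
  end.

Definition wequiv (z1 z2 : wpcl) : Prop :=
  forall g : {set {set P}}, isC g -> wsem z1 g = wsem z2 g.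

End Logic.

Arguments W_const {P D}.

(* Sums over decompositions g = g1 ∪ g2 are finite ⊕-sums, and ⊕ is a
   commutative monoid law, so the laws for ⊎ are reindexings of such sums.
   Annihilation and commutativity follow from 0 ⊗ d = d ⊗ 0 = 0 and from
   swapping (g1, g2).  For associativity, distributivity pulls both nested
   sums into a single sum over triples (g1, g2, g3) of pairwise disjoint
   configuration sets with union g; the two sides then agree termwise by
   associativity of ⊗. *)
From HB Require Import structures.
From mathcomp Require Import all_boot.
Set Implicit Arguments. Unset Strict Implicit. Unset Printing Implicit Defensive.

HB.instance Definition _ (D : pvMonoid) :=
  Monoid.isComLaw.Build (pv_car D) pv_zero pv_add
    (fun a b c => pv_addA a b c) (@pv_addC D) (@pv_add0 D).

Section BigMul.
Variables (D : pvMonoid) (I : finType) (Q : pred I) (F : I -> D).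

Lemma big_pv_mull d : right_add_distributive D ->
  pv_mul (\big[pv_add/pv_zero]_(i | Q i) F i) d
  = \big[pv_add/pv_zero]_(i | Q i) pv_mul (F i) d.
Proof. by move=> distr; apply: (big_endo (pv_mul^~ d)) => [x y|]; rewrite ?distr ?pv_mul0l. Qed.

Lemma big_pv_mulr d : left_add_distributive D ->
  pv_mul d (\big[pv_add/pv_zero]_(i | Q i) F i)
  = \big[pv_add/pv_zero]_(i | Q i) pv_mul d (F i).
Proof. by move=> distr; apply: (big_endo (pv_mul d)) => [x y|]; rewrite ?distr ?pv_mul0r. Qed.

End BigMul.

Section ConfigurationSets.
Variable P : finType.
Implicit Types a b c g : {set {set P}}.

Lemma disjoint_setUl a b c :
  [disjoint a :|: b & c] = [disjoint a & c] && [disjoint b & c].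
Proof. by rewrite -!setI_eq0 setIUl setU_eq0. Qed.

Lemma disjoint_setUr a b c :
  [disjoint c & a :|: b] = [disjoint c & a] && [disjoint c & b].
Proof. by rewrite disjoint_sym disjoint_setUl ![[disjoint c & _]]disjoint_sym. Qed.

Lemma isC_setU a b : isC a -> isC b -> isC (a :|: b).
Proof.
rewrite /isC => /andP[a0 /forall_inP Ia] /andP[_ /forall_inP Ib].
rewrite setU_eq0 negb_and a0; apply/forall_inP => x.
by rewrite in_setU => /orP[/Ia | /Ib].
Qed.

Definition split2 g (p : {set {set P}} * {set {set P}}) : bool :=
  [&& isC p.1, isC p.2, [disjoint p.1 & p.2] & p.1 :|: p.2 == g].

Definition split3 g (t : {set {set P}} * {set {set P}} * {set {set P}}) : bool :=
  [&& isC t.1.1, isC t.1.2, isC t.2,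
      [disjoint t.1.1 & t.1.2], [disjoint t.1.1 & t.2], [disjoint t.1.2 & t.2]
    & t.1.1 :|: t.1.2 :|: t.2 == g].

Lemma split2C g a b : split2 g (b, a) = split2 g (a, b).
Proof. by rewrite /split2 /= disjoint_sym setUC; case: (isC a); case: (isC b). Qed.

Lemma split2_split2l g a b c :
  split2 g (a :|: b, c) && split2 (a :|: b) (a, b) = split3 g (a, b, c).
Proof.
rewrite /split2 /split3 /= disjoint_setUl eqxx andbT.
case Ca: (isC a); case Cb: (isC b); rewrite ?(isC_setU Ca Cb) ?andbF //=.
by case: (isC c); case: [disjoint a & b]; case: [disjoint a & c];
  case: [disjoint b & c]; rewrite ?andbF ?andbT.
Qed.

Lemma split2_split2r g a b c :
  split2 g (a, b :|: c) && split2 (b :|: c) (b, c) = split3 g (a, b, c).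
Proof.
rewrite /split2 /split3 /= disjoint_setUr eqxx andbT setUA.
case Cb: (isC b); case Cc: (isC c); rewrite ?(isC_setU Cb Cc) ?andbF //=.
by case: (isC a); case: [disjoint b & c]; case: [disjoint a & b];
  case: [disjoint a & c]; rewrite ?andbF ?andbT.
Qed.

End ConfigurationSets.

Section Laws.
Variables (P : finType) (D : pvMonoid).
Implicit Types (z : wpcl P D) (g : {set {set P}}).

Lemma wsem_uplus z1 z2 g :
  wsem (W_uplus z1 z2) g
  = \big[pv_add/pv_zero]_(p | split2 g p) pv_mul (wsem z1 p.1) (wsem z2 p.2).
Proof. by []. Qed.

Lemma uplus0r z : wequiv (W_uplus z (W_const pv_zero)) (W_const pv_zero).
Proof. by move=> g _; apply: big1 => p _; apply: pv_mul0r. Qed.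

Lemma uplus0l z : wequiv (W_uplus (W_const pv_zero) z) (W_const pv_zero).
Proof. by move=> g _; apply: big1 => p _; apply: pv_mul0l. Qed.

Lemma uplusC z1 z2 : mul_commutative D -> wequiv (W_uplus z1 z2) (W_uplus z2 z1).
Proof.
move=> mulC g _; rewrite !wsem_uplus.
rewrite (reindex (fun p => (p.2, p.1))) /=; last by exists (fun p => (p.2, p.1)) => -[].
by apply: eq_big => [[a b]|p _]; [exact: split2C | exact: mulC].
Qed.

Lemma wsem_uplus_uplusl z1 z2 z3 g : right_add_distributive D ->
  wsem (W_uplus (W_uplus z1 z2) z3) g
  = \big[pv_add/pv_zero]_(t | split3 g t)
      pv_mul (pv_mul (wsem z1 t.1.1) (wsem z2 t.1.2)) (wsem z3 t.2).
Proof.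
move=> right_distr; rewrite wsem_uplus.
under eq_bigr => p _ do rewrite wsem_uplus big_pv_mull //.
rewrite pair_big_dep /= (reindex (fun t => ((t.1.1 :|: t.1.2, t.2), t.1))) /=.
  by apply: eq_bigl => -[[a b] c]; apply: split2_split2l.
exists (fun x => (x.2, x.1.2)) => [[[a b] c] | [[ab c] [a b]]] //=.
by rewrite inE /= => /andP[_ /and4P[_ _ _ /eqP ->]].
Qed.

Lemma wsem_uplus_uplusr z1 z2 z3 g : left_add_distributive D ->
  wsem (W_uplus z1 (W_uplus z2 z3)) g
  = \big[pv_add/pv_zero]_(t | split3 g t)
      pv_mul (wsem z1 t.1.1) (pv_mul (wsem z2 t.1.2) (wsem z3 t.2)).
Proof.
move=> left_distr; rewrite wsem_uplus.
under eq_bigr => p _ do rewrite wsem_uplus big_pv_mulr //.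
rewrite pair_big_dep /= (reindex (fun t => ((t.1.1, t.1.2 :|: t.2), (t.1.2, t.2)))) /=.
  by apply: eq_bigl => -[[a b] c]; apply: split2_split2r.
exists (fun x => (x.1.1, x.2.1, x.2.2)) => [[[a b] c] | [[a bc] [b c]]] //=.
by rewrite inE /= => /andP[_ /and4P[_ _ _ /eqP ->]].
Qed.

Lemma uplusA z1 z2 z3 : mul_associative D -> add_distributive D ->
  wequiv (W_uplus (W_uplus z1 z2) z3) (W_uplus z1 (W_uplus z2 z3)).
Proof.
move=> mulA [left_distr right_distr] g _.
rewrite wsem_uplus_uplusl // wsem_uplus_uplusr //.
by apply: eq_bigr => t _; rewrite mulA.
Qed.

Lemma mulDr z z1 z2 : left_add_distributive D ->
  wequiv (W_mul z (W_add z1 z2)) (W_add (W_mul z z1) (W_mul z z2)).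
Proof. by move=> distr g _; apply: distr. Qed.

Lemma mulDl z z1 z2 : right_add_distributive D ->
  wequiv (W_mul (W_add z1 z2) z) (W_add (W_mul z1 z) (W_mul z2 z)).
Proof. by move=> distr g _; apply: distr. Qed.

End Laws.

Theorem mainTheorem3 (D : pvMonoid) (P : finType) (HP : 0 < #|P|)
    (z z1 z2 z3 : wpcl P D) :
  (wequiv (W_uplus z (W_const pv_zero)) (W_const pv_zero) /\
   wequiv (W_const pv_zero) (W_uplus (W_const pv_zero) z)) /\
  (mul_commutative D -> wequiv (W_uplus z1 z2) (W_uplus z2 z1)) /\
  (mul_associative D -> add_distributive D ->
     wequiv (W_uplus (W_uplus z1 z2) z3) (W_uplus z1 (W_uplus z2 z3))) /\
  (left_add_distributive D ->
     wequiv (W_mul z (W_add z1 z2)) (W_add (W_mul z z1) (W_mul z z2))) /\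
  (right_add_distributive D ->
     wequiv (W_mul (W_add z1 z2) z) (W_add (W_mul z1 z) (W_mul z2 z))).
Proof.
split; [split | split; [| split; [| split]]].
- exact: uplus0r.
- by move=> g Cg; rewrite (uplus0l z Cg).
- exact: uplusC.
- exact: uplusA.
- exact: mulDr.
- exact: mulDl.
Qed.
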